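(* Let $F,F',G,G'$ be graphs, all with the same vertex set contained in $\{v_1,\ldots,v_n\}$, such that $F\cong F'$, $|E(G)|=|E(G')|$ and $E(F)\cap E(G)=E(F')\cap E(G')=\emptyset$. Then $$\pi\big(F\cup G,\mathfrak C(F,G)\big)=\pi\big(F'\cup G',\mathfrak C(F',G')\big),$$ where $\mathfrak C(F,G)$ denotes the set of all clique covers $\mathcal C$ of $F\cup G$ with $E(G)\subseteq\mathcal C\subseteq\mathcal P(F\cup G)\setminus E(F)$ (edges being regarded as $2$-element vertex sets), and similarly for $\mathfrak C(F',G')$.
   Context: Random intersection graph $\mathcal G(n,m,p)$: vertices $v_1,\ldots,v_n$, attributes $a_1,\ldots,a_m$; each vertex chooses each attribute independently with probability $p$; two vertices are adjacent iff they chose a common attribute. For a graph $H$, $\mathcal P(H)$ is the family of subsets of $V(H)$ containing both ends of at least one edge of $H$. $\mathcal C\subseteq\mathcal P(H)$ is a clique cover of $H$ if every edge of $H$ is contained in some $C\in\mathcal C$. An attribute builds $C\subseteq V(H)$ if all vertices of $C$ and no vertex of $V(H)\setminus C$ chose it. $H$ is given by the clique cover $\mathcal C$ if every $C\in\mathcal C$ is built by some attribute and no $C\in\mathcal P(H)\setminus\mathcal C$ is built by any attribute; $\pi(H,\mathcal C)$ is its probability, and for a family $\mathfrak C$ of clique covers $\pi(H,\mathfrak C)=\sum_{\mathcal C\in\mathfrak C}\pi(H,\mathcal C)$. $F\cup G$ is the graph with vertex set $V(F)\cup V(G)$ and edge set $E(F)\cup E(G)$. *)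

From mathcomp Require Import all_boot all_order all_algebra.
Set Implicit Arguments. Unset Strict Implicit. Unset Printing Implicit Defensive.
Import Order.TTheory GRing.Theory Num.Theory.
Local Open Scope ring_scope.

(* Vertices v_1..v_n are 'I_n, attributes a_1..a_m are 'I_m.
   An outcome of G(n,m,p) is w : {ffun 'I_n * 'I_m -> bool},
   w (v,a) = true iff vertex v chose attribute a. *)
Definition outcome (n m : nat) := {ffun 'I_n * 'I_m -> bool}.

Definition weight {R : pzRingType} (n m : nat) (p : R) (w : outcome n m) : R :=
  \prod_(x : 'I_n * 'I_m) (if w x then p else 1 - p).

Definition is_graph (n : nat) (V : {set 'I_n}) (E : {set {set 'I_n}}) : Prop :=
  forall e, e \in E -> e \subset V /\ #|e| = 2%N.

Definition graph_iso (n : nat) (V : {set 'I_n}) (E : {set {set 'I_n}})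
    (V' : {set 'I_n}) (E' : {set {set 'I_n}}) : Prop :=
  exists f : 'I_n -> 'I_n,
    {in V &, injective f} /\ f @: V = V' /\ E' = [set f @: e | e : {set 'I_n} in E].

Definition Pset (n : nat) (V : {set 'I_n}) (E : {set {set 'I_n}})
  : {set {set 'I_n}} :=
  [set C : {set 'I_n} | (C \subset V) && [exists e in E, e \subset C]].

Definition clique_cover (n : nat) (V : {set 'I_n}) (E : {set {set 'I_n}})
    (CC : {set {set 'I_n}}) : bool :=
  (CC \subset Pset V E) && [forall e in E, exists C in CC, e \subset C].

Definition builds (n m : nat) (w : outcome n m) (V : {set 'I_n}) (a : 'I_m)
    (C : {set 'I_n}) : bool :=
  [forall v in C, w (v, a)] && [forall v in V :\: C, ~~ w (v, a)].

Definition given_by (n m : nat) (w : outcome n m) (V : {set 'I_n})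
    (E : {set {set 'I_n}}) (CC : {set {set 'I_n}}) : bool :=
  [forall C in CC, exists a, builds w V a C] &&
  [forall C in Pset V E :\: CC, forall a, ~~ builds w V a C].

Definition pi {R : pzRingType} (n m : nat) (p : R) (V : {set 'I_n})
    (E : {set {set 'I_n}}) (CC : {set {set 'I_n}}) : R :=
  \sum_(w : outcome n m | given_by w V E CC) weight p w.

Definition pi_fam {R : pzRingType} (n m : nat) (p : R) (V : {set 'I_n})
    (E : {set {set 'I_n}}) (fam : {set {set {set 'I_n}}}) : R :=
  \sum_(CC in fam) pi m p V E CC.

Definition frakC (n : nat) (V : {set 'I_n}) (EF EG : {set {set 'I_n}})
  : {set {set {set 'I_n}}} :=
  [set CC : {set {set 'I_n}} |
     [&& clique_cover V (EF :|: EG) CC, EG \subset CC &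
         CC \subset Pset V (EF :|: EG) :\: EF]].

(* An outcome w gives F ∪ G by a clique cover in C(F,G) exactly when, writing
   S_a for the set of vertices of V that chose attribute a, every edge of F lies
   in some S_a, every edge of G equals some S_a, and no S_a is an edge of F: the
   cover is then forced to be the family of the S_a in P(F ∪ G).  The weight of w
   only depends on the sizes of the sets of vertices choosing each attribute, so
   applying a size-preserving bijection s of the subsets of V to every S_a is a
   weight-preserving bijection of outcomes, and it carries the event for (F, G)
   to the event for (s F, s G) as soon as s preserves the inclusions e ⊆ T with
   e an edge of F.  Two such maps do the job: the vertex isomorphism F ≅ F', and
   then a permutation of the non-edges of F' carrying E(G) onto E(G'); the latter
   fixes the edges of F', and no edge of F' lies inside a non-edge. *)

From Pilot Require Import Defs.
From mathcomp Require Import all_boot all_order all_algebra fingroup perm.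
Set Implicit Arguments. Unset Strict Implicit. Unset Printing Implicit Defensive.
Import Order.TTheory GRing.Theory Num.Theory.
Local Open Scope ring_scope.

Lemma forall_imset (aT rT : finType) (f : aT -> rT) (A : {set aT}) (P : pred rT) :
  [forall y in f @: A, P y] = [forall x in A, P (f x)].
Proof.
apply/forall_inP/forall_inP => [PfA x xA | PA _ /imsetP[x xA ->]]; last exact: PA.
by apply: PfA; apply: imset_f.
Qed.

Lemma mem_imset_in (aT rT : finType) (f : aT -> rT) (D A : {set aT}) x :
  {in D &, injective f} -> A \subset D -> x \in D -> (f x \in f @: A) = (x \in A).
Proof.
move=> f_inj sAD xD; apply/imsetP/idP => [[y yA fxy] | xA]; last by exists x.
by rewrite (f_inj x y xD (subsetP sAD y yA) fxy).
Qed.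

Lemma imset_subset_in (aT rT : finType) (f : aT -> rT) (D A B : {set aT}) :
  {in D &, injective f} -> A \subset D -> B \subset D ->
  (f @: A \subset f @: B) = (A \subset B).
Proof.
move=> f_inj sAD sBD; apply/idP/idP => [sfAB | /imsetS //].
apply/subsetP => x xA; have /imsetP[y yB fxy] := subsetP sfAB _ (imset_f f xA).
by rewrite (f_inj x y (subsetP sAD x xA) (subsetP sBD y yB) fxy).
Qed.

Lemma imset_inj_powerset (aT rT : finType) (f : aT -> rT) (D : {set aT}) :
  {in D &, injective f} -> {in powerset D &, injective (fun A : {set aT} => f @: A)}.
Proof.
move=> f_inj A B; rewrite !powersetE => sAD sBD eq_fAB; apply/eqP.
rewrite eqEsubset -(imset_subset_in f_inj sAD sBD) -(imset_subset_in f_inj sBD sAD).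
by rewrite eq_fAB subxx.
Qed.

Lemma imset_onto_eq_card (T : finType) (A B : {set T}) :
  #|A| = #|B| -> exists f : T -> T, f @: A = B.
Proof.
move=> eq_AB; exists (fun x => nth x (enum B) (index x (enum A))).
have size_AB : size (enum A) = size (enum B) by rewrite -!cardE.
apply/eqP; rewrite eqEsubset; apply/andP; split; apply/subsetP.
  move=> _ /imsetP[x xA ->].
  by rewrite -mem_enum mem_nth // -size_AB index_mem mem_enum.
move=> y yB; have iB : (index y (enum B) < size (enum A))%N.
  by rewrite size_AB index_mem mem_enum.
apply/imsetP; exists (nth y (enum A) (index y (enum B))); first by rewrite -mem_enum mem_nth.
by rewrite index_uniq ?enum_uniq // (set_nth_default y) ?nth_index ?mem_enum // -size_AB.
Qed.

Lemma perm_on_imset_eq_card (T : finType) (D A B : {set T}) :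
  A \subset D -> B \subset D -> #|A| = #|B| -> exists2 g : {perm T}, perm_on D g & g @: A = B.
Proof.
move=> sAD sBD eq_AB; have [f1 f1A] := imset_onto_eq_card eq_AB.
have [f2 f2DA] : exists f2 : T -> T, f2 @: (D :\: A) = D :\: B.
  by apply: imset_onto_eq_card; rewrite !cardsD (setIidPr sAD) (setIidPr sBD) eq_AB.
pose g x := if x \in A then f1 x else if x \in D then f2 x else x.
have setT_split (C : {set T}) : C \subset D -> setT = C :|: (D :\: C) :|: ~: D.
  by move=> sCD; rewrite -{1}(setIidPr sCD) setID setUCr.
have g_onto : g @: setT = setT.
  rewrite [in LHS](setT_split A sAD) [in RHS](setT_split B sBD) !imsetU.
  congr (_ :|: _ :|: _).
  - by rewrite -f1A; apply: eq_in_imset => x xA; rewrite /g xA.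
  - rewrite -f2DA; apply: eq_in_imset => x; rewrite inE /g.
    by case/andP => /negbTE -> ->.
  - rewrite -[RHS]imset_id; apply: eq_in_imset => x; rewrite inE /g => /negbTE xD.
    by rewrite xD (contraFF (subsetP sAD x)).
have g_inj : injective g.
  have /imset_injP g_injT : #|g @: [set: T]| == #|[set: T]| by rewrite g_onto.
  by move=> x y; apply: g_injT; rewrite inE.
exists (perm g_inj); last by rewrite -f1A; apply: eq_in_imset => x xA; rewrite permE /g xA.
apply/subsetP => x; rewrite inE permE /g; apply: contraNT => xD.
by rewrite (negbTE xD) (contraNF (subsetP sAD x)).
Qed.

Section Relabel.

Variables n m : nat.
Implicit Types (sigma : {set 'I_n} -> {set 'I_n}) (w : outcome n m).

Definition chosen (w : outcome n m) (a : 'I_m) : {set 'I_n} := [set v | w (v, a)].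

Definition relabel (sigma : {set 'I_n} -> {set 'I_n}) (w : outcome n m) : outcome n m :=
  [ffun x => x.1 \in sigma (chosen w x.2)].

Lemma chosen_relabel sigma w a : chosen (relabel sigma w) a = sigma (chosen w a).
Proof. by apply/setP => v; rewrite inE ffunE. Qed.

Lemma relabel_inj sigma : injective sigma -> injective (relabel sigma).
Proof.
move=> sigma_inj w1 w2 eq_w; apply/ffunP => -[v a].
have /setP/(_ v) : chosen w1 a = chosen w2 a.
  by apply: sigma_inj; rewrite -!chosen_relabel eq_w.
by rewrite !inE.
Qed.

Lemma weightE (R : comPzRingType) (p : R) w :
  weight p w = \prod_a (p ^+ #|chosen w a| * (1 - p) ^+ #|~: chosen w a|).
Proof.
have -> : weight p w = \prod_v \prod_a (if w (v, a) then p else 1 - p).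
  by rewrite pair_bigA; apply: eq_bigr => -[].
rewrite exchange_big; apply: eq_bigr => a _.
rewrite (bigID (fun v => w (v, a))) /= -!prodr_const.
congr (_ * _); apply: eq_big => v; rewrite ?inE //; by case: (w (v, a)).
Qed.

Lemma weight_relabel (R : comPzRingType) (p : R) sigma w :
  (forall X, #|sigma X| = #|X|) -> weight p (relabel sigma w) = weight p w.
Proof.
move=> sigma_card; have cardC_sigma X : #|~: sigma X| = #|~: X|.
  by apply/eqP; rewrite -(eqn_add2l #|X|) cardsC -sigma_card cardsC.
by rewrite !weightE; apply: eq_bigr => a _; rewrite chosen_relabel cardC_sigma sigma_card.
Qed.

Lemma sum_weight_relabel (R : comPzRingType) (p : R) sigma (P : pred (outcome n m)) :
  injective sigma -> (forall X, #|sigma X| = #|X|) ->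
  \sum_(w | P w) weight p w = \sum_(w | P (relabel sigma w)) weight p w.
Proof.
move=> sigma_inj sigma_card; rewrite (reindex_inj (relabel_inj sigma_inj)).
by apply: eq_bigr => w _; rewrite weight_relabel.
Qed.

End Relabel.

Section FrakCEvent.

Variables (n m : nat) (V : {set 'I_n}).
Implicit Types (w : outcome n m) (C : {set 'I_n}) (E EF EG CC : {set {set 'I_n}}).

Definition attr_clique w (a : 'I_m) : {set 'I_n} := [set v in V | w (v, a)].

Lemma attr_cliqueE w a : attr_clique w a = chosen w a :&: V.
Proof. by apply/setP => v; rewrite !inE andbC. Qed.

Lemma attr_clique_sub w a : attr_clique w a \subset V.
Proof. by rewrite attr_cliqueE subsetIr. Qed.

Lemma builds_attr_clique w a C : C \subset V -> builds w V a C = (attr_clique w a == C).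
Proof.
move=> sCV; apply/andP/eqP => [[/forall_inP inC /forall_inP outC] | <-].
  apply/setP => v; rewrite inE; case vC: (v \in C); first by rewrite (subsetP sCV) ?inC.
  by case vV: (v \in V) => //=; apply/negbTE/outC; rewrite inE vC vV.
by by split; apply/forall_inP => v; rewrite !inE; case: (v \in V); case: (w (v, a)).
Qed.

Definition built_sets E w : {set {set 'I_n}} :=
  [set C in Pset V E | [exists a, attr_clique w a == C]].

Lemma given_by_built_sets E CC w :
  CC \subset Pset V E -> given_by w V E CC = (CC == built_sets E w).
Proof.
move=> sCCP; have sub_of_Pset C : C \in Pset V E -> C \subset V by rewrite inE => /andP[].
apply/andP/eqP => [[/forall_inP built /forall_inP unbuilt] | ->].
  apply/setP => C; rewrite inE; apply/idP/andP => [CCC | [CP /existsP[a /eqP aC]]].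
    have CP := subsetP sCCP C CCC; split => //.
    have /existsP[a] := built C CCC.
    by rewrite builds_attr_clique ?sub_of_Pset // => aC; apply/existsP; exists a.
  apply/negPn/negP => nCC; have CnCC : C \in Pset V E :\: CC by rewrite inE nCC CP.
  have /forallP/(_ a) := unbuilt C CnCC.
  by rewrite builds_attr_clique ?sub_of_Pset // aC eqxx.
split; apply/forall_inP => C.
  rewrite inE => /andP[CP /existsP[a aC]]; apply/existsP; exists a.
  by rewrite builds_attr_clique ?sub_of_Pset.
rewrite in_setD inE => /andP[nB CP]; apply/forallP => a.
rewrite builds_attr_clique ?sub_of_Pset //; apply: contra nB => aC.
by rewrite CP; apply/existsP; exists a.
Qed.

Lemma clique_cover_built_sets E w :
  clique_cover V E (built_sets E w) = [forall e in E, exists a, e \subset attr_clique w a].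
Proof.
have sBP : built_sets E w \subset Pset V E by apply/subsetP => C; rewrite inE => /andP[].
rewrite /clique_cover sBP /=; apply: eq_forallb_in => e eE.
apply/exists_inP/existsP => [[C] | [a ea]].
  by rewrite inE => /andP[_ /existsP[a /eqP <-]] ea; exists a.
exists (attr_clique w a) => //; rewrite !inE attr_clique_sub /=.
by apply/andP; split; apply/existsP; [exists e; rewrite eE | exists a].
Qed.

Lemma subset_built_sets E EG w : EG \subset Pset V E ->
  (EG \subset built_sets E w) = [forall g in EG, exists a, attr_clique w a == g].
Proof.
move=> sGP; apply/subsetP/forall_inP => [sGB g gG | built g gG].
  by have := sGB g gG; rewrite inE => /andP[].
by rewrite inE (subsetP sGP) ?built.
Qed.

Lemma built_sets_subsetD E EF w : EF \subset E ->
  (built_sets E w \subset Pset V E :\: EF) = [forall a, attr_clique w a \notin EF].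
Proof.
move=> sFE; apply/subsetP/forallP => [sBPF a | notF C].
  apply/negP => aF; have : attr_clique w a \in built_sets E w.
    rewrite !inE attr_clique_sub; apply/andP; split; apply/existsP; last by exists a.
    by exists (attr_clique w a); rewrite (subsetP sFE _ aF) subxx.
  by move/sBPF; rewrite inE aF.
by rewrite !inE => /andP[-> /existsP[a /eqP <-]]; rewrite notF.
Qed.

Definition frakC_event EF EG w : bool :=
  [&& [forall e in EF, exists a, e \subset attr_clique w a],
      [forall g in EG, exists a, attr_clique w a == g] &
      [forall a, attr_clique w a \notin EF]].

Lemma built_sets_frakC EF EG w : EG \subset powerset V ->
  (built_sets (EF :|: EG) w \in frakC V EF EG) = frakC_event EF EG w.
Proof.
move=> sGV; have sGP : EG \subset Pset V (EF :|: EG).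
  apply/subsetP => g gG; rewrite inE -powersetE (subsetP sGV) //=.
  by apply/existsP; exists g; rewrite inE gG orbT subxx.
rewrite inE clique_cover_built_sets subset_built_sets // built_sets_subsetD ?subsetUl //.
rewrite /frakC_event; case Gbuilt: [forall g in EG, _]; rewrite ?andbF //=.
congr (_ && _); apply/forall_inP/forall_inP => [cover e eF | cover e].
  by rewrite cover ?inE ?eF.
case/setUP => [/cover // | eG]; have /existsP[a /eqP ae] := forall_inP Gbuilt e eG.
by apply/existsP; exists a; rewrite ae.
Qed.

Lemma pi_fam_frakC (R : pzRingType) (p : R) EF EG : EG \subset powerset V ->
  pi_fam m p V (EF :|: EG) (frakC V EF EG) = \sum_(w | frakC_event EF EG w) weight p w.
Proof.
move=> sGV; rewrite /pi_fam /Defs.pi (exchange_big_dep predT) //= [RHS]big_mkcond.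
have frakC_Pset CC : CC \in frakC V EF EG -> CC \subset Pset V (EF :|: EG).
  by rewrite inE => /and3P[/andP[]].
apply: eq_bigr => w _; rewrite -built_sets_frakC //.
rewrite (eq_bigl (fun CC => (CC == built_sets (EF :|: EG) w) &&
                            (built_sets (EF :|: EG) w \in frakC V EF EG))).
  case: ifP => _; last by rewrite big_pred0 // => CC; rewrite andbF.
  by under eq_bigl do rewrite andbT; rewrite big_pred1_eq.
move=> CC; apply/andP/andP => [[CCfrak] | [/eqP -> Bfrak]].
  by rewrite given_by_built_sets ?frakC_Pset // => /eqP CCB; rewrite -CCB CCfrak.
by rewrite given_by_built_sets ?frakC_Pset ?eqxx.
Qed.

End FrakCEvent.

Section Transfer.

Variables (n m : nat) (V : {set 'I_n}) (s : {set 'I_n} -> {set 'I_n}).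
Hypotheses (s_inj : {in powerset V &, injective s})
  (s_sub : {in powerset V, forall T, s T \subset V})
  (s_card : {in powerset V, forall T, #|s T| = #|T|}).
Implicit Types (X : {set 'I_n}) (EF EG : {set {set 'I_n}}) (w : outcome n m).

Definition lift_on X : {set 'I_n} := s (X :&: V) :|: (X :\: V).

Let IV_powerset X : X :&: V \in powerset V.
Proof. by rewrite powersetE subsetIr. Qed.

Lemma lift_onIV X : lift_on X :&: V = s (X :&: V).
Proof.
by rewrite setIUl (setIidPl (s_sub (IV_powerset X))) setIDAC setDIl setDv setI0 setU0.
Qed.

Lemma lift_onDV X : lift_on X :\: V = X :\: V.
Proof.
rewrite setDUl setDDl setUid; apply/setUidPr/subsetP => v.
by rewrite inE => /andP[/negP vV /(subsetP (s_sub (IV_powerset X)))].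
Qed.

Lemma lift_on_inj : injective lift_on.
Proof.
move=> X Y eqXY; rewrite -(setID X V) -(setID Y V) -lift_onDV eqXY lift_onDV.
by congr (_ :|: _); apply: s_inj; rewrite ?IV_powerset // -!lift_onIV eqXY.
Qed.

Lemma card_lift_on X : #|lift_on X| = #|X|.
Proof. by rewrite -(cardsID V) lift_onIV lift_onDV s_card ?IV_powerset ?cardsID. Qed.

Lemma attr_clique_relabel w a :
  attr_clique V (relabel lift_on w) a = s (attr_clique V w a).
Proof. by rewrite !attr_cliqueE chosen_relabel lift_onIV. Qed.

Lemma frakC_event_relabel EF EG w :
  EF \subset powerset V -> EG \subset powerset V ->
  {in EF & powerset V, forall e T, (s e \subset s T) = (e \subset T)} ->
  frakC_event V (s @: EF) (s @: EG) (relabel lift_on w) = frakC_event V EF EG w.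
Proof.
move=> sFV sGV s_subset; have cliqueV a : attr_clique V w a \in powerset V.
  by rewrite powersetE attr_clique_sub.
rewrite /frakC_event !forall_imset; congr [&& _, _ & _].
- apply: eq_forallb_in => e eF; apply: eq_existsb => a.
  by rewrite attr_clique_relabel s_subset ?cliqueV.
- apply: eq_forallb_in => g gG; apply: eq_existsb => a.
  by rewrite attr_clique_relabel (inj_in_eq s_inj) ?cliqueV ?(subsetP sGV).
- by apply: eq_forallb => a; rewrite attr_clique_relabel (mem_imset_in s_inj sFV (cliqueV a)).
Qed.

Lemma sum_frakC_event_transfer (R : comPzRingType) (p : R) EF EG :
  EF \subset powerset V -> EG \subset powerset V ->
  {in EF & powerset V, forall e T, (s e \subset s T) = (e \subset T)} ->
  \sum_(w : outcome n m | frakC_event V EF EG w) weight p w =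
  \sum_(w : outcome n m | frakC_event V (s @: EF) (s @: EG) w) weight p w.
Proof.
move=> sFV sGV s_subset; rewrite [RHS](sum_weight_relabel _ _ lift_on_inj card_lift_on).
by apply: eq_bigl => w; rewrite frakC_event_relabel.
Qed.

End Transfer.

Lemma is_graph_powerset n (V : {set 'I_n}) E : is_graph V E -> E \subset powerset V.
Proof. by move=> E_graph; apply/subsetP => e /E_graph[eV _]; rewrite powersetE. Qed.

Section VertexRelabelling.

Variables (n : nat) (V : {set 'I_n}) (f : 'I_n -> 'I_n).
Hypotheses (f_inj : {in V &, injective f}) (f_onto : f @: V = V).

Lemma is_graph_imset E : is_graph V E -> is_graph V [set f @: e | e : {set 'I_n} in E].
Proof.
move=> E_graph _ /imsetP[e /E_graph[eV e2] ->]; split; first by rewrite -f_onto imsetS.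
by rewrite (card_in_imset (sub_in2 (subsetP eV) f_inj)).
Qed.

Lemma sum_frakC_event_imset (R : comPzRingType) (p : R) m (EF EG : {set {set 'I_n}}) :
  EF \subset powerset V -> EG \subset powerset V ->
  \sum_(w : outcome n m | frakC_event V EF EG w) weight p w =
  \sum_(w : outcome n m | frakC_event V [set f @: e | e : {set 'I_n} in EF]
                                         [set f @: e | e : {set 'I_n} in EG] w) weight p w.
Proof.
move=> sFV sGV; apply: sum_frakC_event_transfer => //.
- exact: imset_inj_powerset.
- by move=> T; rewrite powersetE -{2}f_onto; apply: imsetS.
- by move=> T; rewrite powersetE => /subsetP sTV; rewrite (card_in_imset (sub_in2 sTV f_inj)).
- move=> e T eF; rewrite powersetE; apply: imset_subset_in => //.
  by rewrite -powersetE (subsetP sFV).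
Qed.

End VertexRelabelling.

Definition compl_edges n (V : {set 'I_n}) (E : {set {set 'I_n}}) : {set {set 'I_n}} :=
  [set T in powerset V | #|T| == 2%N] :\: E.

Lemma is_graph_compl_edges n (V : {set 'I_n}) EF EG :
  is_graph V EG -> EF :&: EG = set0 -> EG \subset compl_edges V EF.
Proof.
move=> EG_graph disjFG; apply/subsetP => g gG; have [gV g2] := EG_graph g gG.
rewrite !inE gV g2 eqxx !andbT; apply/negP => gF.
have : g \in EF :&: EG by rewrite inE gF.
by rewrite disjFG inE.
Qed.

Lemma edge_subset_compl_edges n (V : {set 'I_n}) EF e X :
  is_graph V EF -> e \in EF -> X \in compl_edges V EF -> (e \subset X) = false.
Proof.
move=> EF_graph eF; have [_ e2] := EF_graph e eF.
rewrite !inE => /andP[XnF /andP[_ /eqP X2]]; apply: contraNF XnF => eX.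
by have /eqP <- : e == X by rewrite eqEcard eX X2 e2.
Qed.

Lemma sum_frakC_event_eq_card (R : comPzRingType) (p : R) n m (V : {set 'I_n}) EF EG EG' :
  is_graph V EF -> is_graph V EG -> is_graph V EG' -> #|EG| = #|EG'| ->
  EF :&: EG = set0 -> EF :&: EG' = set0 ->
  \sum_(w : outcome n m | frakC_event V EF EG w) weight p w =
  \sum_(w : outcome n m | frakC_event V EF EG' w) weight p w.
Proof.
move=> EF_graph EG_graph EG'_graph eq_card disjFG disjFG'.
have [g g_on gG] := perm_on_imset_eq_card (is_graph_compl_edges EG_graph disjFG)
  (is_graph_compl_edges EG'_graph disjFG') eq_card.
have g_fixF e : e \in EF -> g e = e by move=> eF; rewrite (out_perm g_on) // !inE eF.
have in_compl T : T \in compl_edges V EF -> [/\ T \subset V, #|T| = 2%N & T \notin EF].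
  by rewrite !inE => /and3P[TnF TV /eqP T2].
have g_closed T : T \in compl_edges V EF -> g T \in compl_edges V EF.
  by rewrite (perm_closed _ g_on).
have gF : g @: EF = EF by rewrite (eq_in_imset g_fixF) imset_id.
transitivity (\sum_(w : outcome n m | frakC_event V (g @: EF) (g @: EG) w) weight p w).
  apply: sum_frakC_event_transfer; rewrite ?is_graph_powerset //.
  - exact: in2W perm_inj.
  - move=> T; rewrite powersetE => sTV.
    case: (boolP (T \in compl_edges V EF)) => [Tc | /(out_perm g_on) -> //].
    by case: (in_compl _ (g_closed _ Tc)).
  - move=> T _; case: (boolP (T \in compl_edges V EF)) => [Tc | /(out_perm g_on) -> //].
    by have [_ -> _] := in_compl _ (g_closed _ Tc); case: (in_compl _ Tc).
  - move=> e T eF _; rewrite g_fixF //.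
    case: (boolP (T \in compl_edges V EF)) => [Tc | /(out_perm g_on) -> //].
    by rewrite !(edge_subset_compl_edges EF_graph) ?g_closed.
by rewrite gF gG.
Qed.

Theorem corollary5p3 (R : realFieldType) (n m : nat) (p : R)
    (hp0 : 0 <= p) (hp1 : p <= 1)
    (V : {set 'I_n}) (EF EG EF' EG' : {set {set 'I_n}})
    (hF : is_graph V EF) (hG : is_graph V EG)
    (hF' : is_graph V EF') (hG' : is_graph V EG')
    (hiso : graph_iso V EF V EF')
    (hcard : #|EG| = #|EG'|)
    (hdisj : EF :&: EG = set0) (hdisj' : EF' :&: EG' = set0) :
  pi_fam m p V (EF :|: EG) (frakC V EF EG) =
  pi_fam m p V (EF' :|: EG') (frakC V EF' EG').
Proof.
have [f [f_inj [f_onto EF'_def]]] := hiso.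
have [sFV sGV] := (is_graph_powerset hF, is_graph_powerset hG).
have fE_inj := imset_inj_powerset f_inj.
rewrite !pi_fam_frakC ?is_graph_powerset // (sum_frakC_event_imset f_inj f_onto) //.
rewrite EF'_def; apply: sum_frakC_event_eq_card; rewrite -?EF'_def //.
- exact: is_graph_imset.
- by rewrite -hcard (card_in_imset (sub_in2 (subsetP sGV) fE_inj)).
- rewrite EF'_def -imsetI ?hdisj ?imset0 // => e g eF gG.
  by apply: fE_inj; [apply: (subsetP sFV) | apply: (subsetP sGV)].
Qed.
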